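(* Let $A=\{(x_k,y_k):k\in[\ell]\}\subset\mathbb N^d$ be finite, $d=m+n$. Then for all $\bar k\in[\ell]$: (a) $\mathbb D_{\mathrm{in}}(x_{\bar k},y_{\bar k},T_{\mathbb Q_{-\infty},V}(A))=\mathbb D_{\mathrm{in}}(x_{\bar k},y_{\bar k},Z_{\mathbb Q_{-\infty},V}(A))$; (b) $\mathbb D_{\mathrm{in}}(x_{\bar k},y_{\bar k},T_{\mathbb Q_{-\infty},C}(A))=\mathbb D_{\mathrm{in}}(x_{\bar k},y_{\bar k},Z_{\mathbb Q_{-\infty},C}(A))$; (c) $\mathbb D_{\mathrm{out}}(x_{\bar k},y_{\bar k},T_{\mathbb Q_{-\infty},V}(A))=\mathbb D_{\mathrm{out}}(x_{\bar k},y_{\bar k},Z_{\mathbb Q_{-\infty},V}(A))$; (d) $\mathbb D_{\mathrm{out}}(x_{\bar k},y_{\bar k},T_{\mathbb Q_{-\infty},C}(A))=\mathbb D_{\mathrm{out}}(x_{\bar k},y_{\bar k},Z_{\mathbb Q_{-\infty},C}(A))$.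
   Context: $\mathbb N$ is the set of non-negative integers; $[\ell]=\{1,\dots,\ell\}$; $1\!\!1$ denotes a vector of ones; $\wedge$ is componentwise min. Min-Plus technologies: $T_{\mathbb Q_{-\infty},V}(A)=\{(x,y)\in\mathbb{R}_+^d: x\ge\bigwedge_k(t_k1\!\!1_m+x_k),\ y\le\bigwedge_k(t_k1\!\!1_n+y_k),\ \min_k t_k=0,\ t\in(\mathbb{R}\cup\{+\infty\})^\ell\}$, and $T_{\mathbb Q_{-\infty},C}(A)$ is the same without the constraint $\min_k t_k=0$. Discrete versions: $Z_{\mathbb Q_{-\infty},V}(A)=T_{\mathbb Q_{-\infty},V}(A)\cap\mathbb N^d$, $Z_{\mathbb Q_{-\infty},C}(A)=T_{\mathbb Q_{-\infty},C}(A)\cap\mathbb N^d$. Translation distance functions: $\mathbb D_{\mathrm{in}}(x,y,T)=\sup\{\delta\in\mathbb{R}:(x-\delta1\!\!1_m,y)\in T\}$, $\mathbb D_{\mathrm{out}}(x,y,T)=\sup\{\delta\in\mathbb{R}:(x,y+\delta1\!\!1_n)\in T\}$. *)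

From HB Require Import structures.
From mathcomp Require Import all_boot all_order all_algebra.
From mathcomp Require Import all_classical all_reals all_analysis.
Set Implicit Arguments. Unset Strict Implicit. Unset Printing Implicit Defensive.
Import Order.TTheory GRing.Theory Num.Theory.
Local Open Scope classical_set_scope.
Local Open Scope ring_scope.

(* The data set A = {(x_k, y_k) : k in [l]} in N^(m+n) is given by
   X : 'I_l -> 'I_m -> nat (inputs) and Y : 'I_l -> 'I_n -> nat (outputs). *)

Definition emin (R : realType) (l : nat) (f : 'I_l -> \bar R) : \bar R :=
  \big[Order.min/+oo%E]_(k < l) f k.

Definition T_minplus (R : realType) (vrs : bool) (m n l : nat)
    (X : 'I_l -> 'I_m -> nat) (Y : 'I_l -> 'I_n -> nat)
    (x : 'I_m -> R) (y : 'I_n -> R) : Prop :=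
  (forall i, 0 <= x i) /\ (forall j, 0 <= y j) /\
  exists t : 'I_l -> \bar R,
    (forall k, t k != -oo%E) /\
    (forall i, (emin (fun k => t k + ((X k i)%:R)%:E) <= (x i)%:E)%E) /\
    (forall j, ((y j)%:E <= emin (fun k => t k + ((Y k j)%:R)%:E))%E) /\
    (vrs -> emin t = 0%E).

Definition TV (R : realType) m n l X Y := @T_minplus R true m n l X Y.
Definition TC (R : realType) m n l X Y := @T_minplus R false m n l X Y.

Definition discr (R : realType) (m n : nat)
    (T : ('I_m -> R) -> ('I_n -> R) -> Prop) (x : 'I_m -> R) (y : 'I_n -> R) : Prop :=
  T x y /\ (forall i, exists a : nat, x i = a%:R) /\ (forall j, exists b : nat, y j = b%:R).

Definition ZV (R : realType) m n l X Y := discr (@TV R m n l X Y).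
Definition ZC (R : realType) m n l X Y := discr (@TC R m n l X Y).

Definition Din (R : realType) (m n : nat) (x : 'I_m -> R) (y : 'I_n -> R)
    (T : ('I_m -> R) -> ('I_n -> R) -> Prop) : \bar R :=
  ereal_sup [set (d%:E)%E | d in [set d : R | T (fun i => x i - d) y]].

Definition Dout (R : realType) (m n : nat) (x : 'I_m -> R) (y : 'I_n -> R)
    (T : ('I_m -> R) -> ('I_n -> R) -> Prop) : \bar R :=
  ereal_sup [set (d%:E)%E | d in [set d : R | T x (fun j => y j + d)]].

Definition ptx (R : realType) m l (X : 'I_l -> 'I_m -> nat) (k : 'I_l) : 'I_m -> R :=
  fun i => (X k i)%:R.
Definition pty (R : realType) n l (Y : 'I_l -> 'I_n -> nat) (k : 'I_l) : 'I_n -> R :=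
  fun j => (Y k j)%:R.

From mathcomp Require Import all_boot all_order all_algebra.
From mathcomp Require Import all_classical all_reals all_analysis.
Set Implicit Arguments. Unset Strict Implicit. Unset Printing Implicit Defensive.
Import Order.TTheory GRing.Theory Num.Theory.
Local Open Scope classical_set_scope.
Local Open Scope ring_scope.

(* If g : R -> R is nondecreasing, fixes 0 and commutes with translations by
   naturals, then it commutes with the min-plus expressions defining T_minplus,
   because the data X, Y are natural.  Replacing every weight t_k by g t_k thus
   turns a witness for (x, y) into one for any (x', y') with g x <= x' and
   y' <= g y.  For an integral point, g = floor on the inputs sends a feasible
   (x - d, y) to the integral point (x - ceil d, y), and g = ceil on the outputs
   sends (x, y + d) to (x, y + ceil d); as ceil d >= d, the supremum over the
   discrete technology is not smaller than over the continuous one. *)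

Lemma homo_morph_min d d' (T : orderType d) (T' : orderType d')
    (f : T -> T') :
  {homo f : x y / (x <= y)%O} -> {morph f : x y / Order.min x y}.
Proof.
move=> f_homo x y; case: (leP x y) => [xy|/ltW yx].
- by rewrite !min_l ?f_homo.
- by rewrite !min_r ?f_homo.
Qed.

Lemma ereal_sup_EFin_dominated (R : realType) (A B : set R) :
  B `<=` A -> (forall a, A a -> exists2 b, B b & a <= b) ->
  ereal_sup (EFin @` A) = ereal_sup (EFin @` B).
Proof.
move=> BA A_dom; apply/eqP; rewrite eq_le; apply/andP; split.
- apply: ge_ereal_sup => _ [a Aa <-]; have [b Bb ab] := A_dom a Aa.
  by apply: le_ereal_sup_tmp; exists b%:E; [exists b | rewrite lee_fin].
- by apply: ereal_sup_le => _ [b Bb <-]; exists b => //; apply: BA.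
Qed.

Section RoundWeights.
Variables (R : realType) (g : R -> R).
Hypothesis g_homo : {homo g : a b / a <= b}.
Hypothesis gDn : forall a (c : nat), g (a + c%:R) = g a + c%:R.
Hypothesis g0 : g 0 = 0.

Lemma er_map_emin l (f : 'I_l -> \bar R) :
  er_map g (emin f) = emin (er_map g \o f).
Proof.
have er_map_pinfty : er_map g +oo%E = +oo%E by [].
exact: (big_morph _ (homo_morph_min (le_er_map g_homo)) er_map_pinfty).
Qed.

Lemma er_mapDn (e : \bar R) (c : nat) :
  er_map g (e + (c%:R)%:E)%E = (er_map g e + (c%:R)%:E)%E.
Proof. by case: e => [r| |] //=; rewrite gDn. Qed.

Lemma T_minplus_round vrs m n l (X : 'I_l -> 'I_m -> nat) (Y : 'I_l -> 'I_n -> nat)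
    (x x' : 'I_m -> R) (y y' : 'I_n -> R) :
  T_minplus vrs X Y x y ->
  (forall i, 0 <= x' i) -> (forall j, 0 <= y' j) ->
  (forall i, g (x i) <= x' i) -> (forall j, y' j <= g (y j)) ->
  T_minplus vrs X Y x' y'.
Proof.
move=> [_ [_ [t [t_fin [tx [ty t_min]]]]]] x'_ge0 y'_ge0 gx gy.
have er_map_emin_shift (Z : 'I_l -> nat) :
    er_map g (emin (fun k => t k + ((Z k)%:R)%:E)%E) =
    emin (fun k => er_map g (t k) + ((Z k)%:R)%:E)%E.
  by rewrite er_map_emin; apply: eq_bigr => k _; rewrite /= er_mapDn.
do 2 split=> //; exists (er_map g \o t); split; [|split; [|split]].
- by move=> k /=; case: (t k) (t_fin k).
- move=> i; rewrite -er_map_emin_shift (le_trans (le_er_map g_homo (tx i))) //.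
  by rewrite lee_fin.
- move=> j; rewrite -er_map_emin_shift (le_trans _ (le_er_map g_homo (ty j))) //.
  by rewrite lee_fin.
- by move=> /t_min; rewrite -er_map_emin => ->; rewrite /= g0.
Qed.

End RoundWeights.

Section IntegralPoints.
Variables (R : realType) (vrs : bool) (m n l : nat).
Variables (X : 'I_l -> 'I_m -> nat) (Y : 'I_l -> 'I_n -> nat).

Lemma T_minplus_floor_inputs (x : 'I_m -> R) (y : 'I_n -> R) :
  (forall j, y j \is a Num.int) -> T_minplus vrs X Y x y ->
  T_minplus vrs X Y (fun i => (Num.floor (x i))%:~R) y.
Proof.
move=> y_int Txy; have [x_ge0 [y_ge0 _]] := Txy.
have floor_homo : {homo (fun r : R => (Num.floor r)%:~R : R) : a b / a <= b}.
  by move=> a b ab; rewrite ler_int le_floor.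
have floorDn (a : R) (c : nat) :
    (Num.floor (a + c%:R))%:~R = (Num.floor a)%:~R + c%:R :> R.
  by rewrite floorDrz ?natr_int // intrD [X in _ + X]floorK ?natr_int.
apply: (T_minplus_round floor_homo floorDn _ Txy) => [|i|//|//|j].
- by rewrite floor0.
- by rewrite ler0z floor_ge0.
- by rewrite floorK.
Qed.

Lemma T_minplus_ceil_outputs (x : 'I_m -> R) (y : 'I_n -> R) :
  (forall i, x i \is a Num.int) -> T_minplus vrs X Y x y ->
  T_minplus vrs X Y x (fun j => (Num.ceil (y j))%:~R).
Proof.
move=> x_int Txy; have [x_ge0 [y_ge0 _]] := Txy.
have ceil_homo : {homo (fun r : R => (Num.ceil r)%:~R : R) : a b / a <= b}.
  by move=> a b ab; rewrite ler_int le_ceil.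
have ceilDn (a : R) (c : nat) :
    (Num.ceil (a + c%:R))%:~R = (Num.ceil a)%:~R + c%:R :> R.
  by rewrite ceilDrz ?natr_int // intrD [X in _ + X]ceilK ?natr_int.
apply: (T_minplus_round ceil_homo ceilDn _ Txy) => [|//|j|i|//].
- by rewrite ceil0.
- by rewrite (le_trans (y_ge0 j)) ?ceil_ge.
- by rewrite ceilK.
Qed.

Lemma discr_T_minplus (x : 'I_m -> R) (y : 'I_n -> R) :
  (forall i, x i \is a Num.int) -> (forall j, y j \is a Num.int) ->
  T_minplus vrs X Y x y -> discr (T_minplus vrs X Y) x y.
Proof.
move=> x_int y_int Txy; have [x_ge0 [y_ge0 _]] := Txy.
by split=> //; split=> [i|j]; apply/natrP;
  rewrite natrEint ?x_int ?y_int ?x_ge0 ?y_ge0.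
Qed.

Lemma Din_T_minplus_discr (x : 'I_m -> R) (y : 'I_n -> R) :
  (forall i, x i \is a Num.int) -> (forall j, y j \is a Num.int) ->
  Din x y (T_minplus vrs X Y) = Din x y (discr (T_minplus vrs X Y)).
Proof.
move=> x_int y_int; apply: ereal_sup_EFin_dominated => [d [] //|d Td].
exists (Num.ceil d)%:~R => /=; last exact: ceil_ge.
have -> : (fun i => x i - (Num.ceil d)%:~R) = (fun i => (Num.floor (x i - d))%:~R).
  apply/funext => i; rewrite [x i - d]addrC floorDrz // floorNceil opprK.
  by rewrite intrD intrN (floorK (x_int i)) addrC.
apply: discr_T_minplus => [i|//|]; first exact: intr_int.
exact: T_minplus_floor_inputs.
Qed.

Lemma Dout_T_minplus_discr (x : 'I_m -> R) (y : 'I_n -> R) :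
  (forall i, x i \is a Num.int) -> (forall j, y j \is a Num.int) ->
  Dout x y (T_minplus vrs X Y) = Dout x y (discr (T_minplus vrs X Y)).
Proof.
move=> x_int y_int; apply: ereal_sup_EFin_dominated => [d [] //|d Td].
exists (Num.ceil d)%:~R => /=; last exact: ceil_ge.
have -> : (fun j => y j + (Num.ceil d)%:~R) = (fun j => (Num.ceil (y j + d))%:~R).
  apply/funext => j; rewrite [y j + d]addrC ceilDrz //.
  by rewrite intrD (ceilK (y_int j)) addrC.
apply: discr_T_minplus => [//|j|]; first exact: intr_int.
exact: T_minplus_ceil_outputs.
Qed.

End IntegralPoints.

Theorem mainTheorem8 (R : realType) (m n l : nat)
    (X : 'I_l -> 'I_m -> nat) (Y : 'I_l -> 'I_n -> nat) (kb : 'I_l) :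
  let xk := @ptx R m l X kb in
  let yk := @pty R n l Y kb in
  [/\ Din xk yk (@TV R m n l X Y) = Din xk yk (@ZV R m n l X Y),
      Din xk yk (@TC R m n l X Y) = Din xk yk (@ZC R m n l X Y),
      Dout xk yk (@TV R m n l X Y) = Dout xk yk (@ZV R m n l X Y)
    & Dout xk yk (@TC R m n l X Y) = Dout xk yk (@ZC R m n l X Y)].
Proof.
move=> xk yk.
have xk_int i : xk i \is a Num.int by exact: natr_int.
have yk_int j : yk j \is a Num.int by exact: natr_int.
by split; [apply: Din_T_minplus_discr|apply: Din_T_minplus_discr
          |apply: Dout_T_minplus_discr|apply: Dout_T_minplus_discr].
Qed.
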